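(* Let $n\geq 3$ and let $A$ be an $F_n$-good $n\times n$ matrix. If row $i$ of $A$ has two entries equal to $1$, in columns $j$ and $k$ with $j<k$, then $k=j+2$ and $i\in\{1,n\}$.
   Context: $F_n$ is the set of vectors $\vec{x}=(x_1,\ldots,x_n)\in\mathbb{Z}_2^n$ with no $i$ such that $x_i=x_{i+1}=1$. An $n\times n$ matrix $A$ over $\mathbb{Z}_2$ is $F_n$-good if it is invertible and $A\vec{x}\in F_n$ for all $\vec{x}\in F_n$. *)

From mathcomp Require Import all_boot all_algebra.
Set Implicit Arguments. Unset Strict Implicit. Unset Printing Implicit Defensive.
Import GRing.Theory.
Local Open Scope ring_scope.

(* Vectors in Z_2^n are column vectors 'cV['F_2]_n, indices 0-based:
   coordinate x_{i+1} of the paper is x i 0. *)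

Definition in_Fn (n : nat) (x : 'cV['F_2]_n) : Prop :=
  forall i j : 'I_n, (j : nat) = i.+1 -> ~ (x i 0 = 1 /\ x j 0 = 1).

Definition Fn_good (n : nat) (A : 'M['F_2]_n) : Prop :=
  A \in unitmx /\ forall x : 'cV['F_2]_n, in_Fn x -> in_Fn (A *m x).

(** Test [A] on the vectors [e_a] and [e_a + e_b] (with [a], [b] not adjacent),
    which lie in [F_n]: two adjacent rows of [A] have disjoint supports, and
    every 1 of one of them is adjacent to every 1 of the other.  A row with 1s
    in columns [j < k] therefore forces every neighbouring row, which is nonzero
    since [A] is invertible, to be supported in column [j + 1] alone, at
    distance 1 from both, so [k = j + 2].  An interior row would have two such
    neighbours, i.e. two equal rows, contradicting invertibility. *)

From mathcomp Require Import all_boot all_algebra.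
From mathcomp Require Import zify.
Set Implicit Arguments. Unset Strict Implicit. Unset Printing Implicit Defensive.
Import GRing.Theory.
Local Open Scope ring_scope.

Lemma F2_neq0 (x : 'F_2) : x != 0 -> x = 1.
Proof. by case: x => [[|[|m]] //= Hm] _; apply/val_inj. Qed.

Definition adjacent (n : nat) (p q : 'I_n) : bool := (p.+1 == q) || (q.+1 == p).

Lemma adjacentC (n : nat) (p q : 'I_n) : adjacent p q = adjacent q p.
Proof. by rewrite /adjacent orbC. Qed.

Lemma exists_adjacent (n : nat) (p : 'I_n) : (1 < n)%N -> exists q : 'I_n, adjacent p q.
Proof.
move=> n_gt1; case: (ltnP p.+1 n) => [lt_p1n | le_np1].
  by exists (Ordinal lt_p1n); rewrite /adjacent eqxx.
have lt_p'n : (p.-1 < n)%N by have := ltn_ord p; lia.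
by exists (Ordinal lt_p'n); rewrite /adjacent /=; apply/orP; right; apply/eqP; lia.
Qed.

Lemma in_Fn_adjacent (n : nat) (x : 'cV['F_2]_n) :
  in_Fn x <-> forall p q : 'I_n, adjacent p q -> ~ (x p 0 = 1 /\ x q 0 = 1).
Proof.
split=> Fx p q adj_pq; last by apply: Fx; rewrite /adjacent adj_pq eqxx.
case/orP: adj_pq => /eqP adj_pq; first exact: Fx p q (esym adj_pq).
by move=> [xp xq]; apply: (Fx q p (esym adj_pq)).
Qed.

Lemma delta_in_Fn (n : nat) (a : 'I_n) : in_Fn (delta_mx a 0 : 'cV['F_2]_n).
Proof.
move=> p q adj_pq; rewrite !mxE !andbT.
have one_at (l : 'I_n) : (l == a)%:R = 1 :> 'F_2 -> l = a by case: eqP.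
by move=> [/one_at pa /one_at qa]; move: adj_pq; rewrite pa qa; lia.
Qed.

Lemma delta_add_in_Fn (n : nat) (a b : 'I_n) :
  ~~ adjacent a b -> in_Fn (delta_mx a 0 + delta_mx b 0 : 'cV['F_2]_n).
Proof.
move=> nadj_ab p q adj_pq; rewrite !mxE !andbT.
have one_at (l : 'I_n) : (l == a)%:R + (l == b)%:R = 1 :> 'F_2 -> (l == a) || (l == b).
  by case: (l == a); case: (l == b).
move=> [/one_at/orP[]/eqP pa /one_at/orP[]/eqP qa];
  by move: adj_pq nadj_ab; rewrite pa qa /adjacent; lia.
Qed.

Section FnPreserving.

Variables (n : nat) (A : 'M['F_2]_n).
Hypothesis A_Fn : forall x : 'cV['F_2]_n, in_Fn x -> in_Fn (A *m x).

Lemma adjacent_rows_disjoint (p q a : 'I_n) :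
  adjacent p q -> A p a = 1 -> A q a = 0.
Proof.
move=> adj_pq Apa; have [// | /F2_neq0 Aqa] := eqVneq (A q a) 0.
have /in_Fn_adjacent/(_ p q adj_pq) := A_Fn (@delta_in_Fn n a).
by rewrite -colE !mxE => /(_ (conj Apa Aqa)).
Qed.

Lemma adjacent_rows_ones_adjacent (p q a b : 'I_n) :
  adjacent p q -> A p a = 1 -> A q b = 1 -> adjacent a b.
Proof.
move=> adj_pq Apa Aqb; apply: contraT => nadj_ab.
have Aqa := adjacent_rows_disjoint adj_pq Apa.
have Apb := adjacent_rows_disjoint (etrans (adjacentC q p) adj_pq) Aqb.
have /in_Fn_adjacent/(_ p q adj_pq) := A_Fn (delta_add_in_Fn nadj_ab).
by rewrite mulmxDr -!colE !mxE Apa Aqb Aqa Apb addr0 add0r => /(_ (conj erefl erefl)).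
Qed.

Lemma adjacent_row_of_two_ones (i q j k l : 'I_n) :
  adjacent i q -> (j < k)%N -> A i j = 1 -> A i k = 1 -> A q l = 1 ->
  (k : nat) = (j + 2)%N /\ (l : nat) = j.+1.
Proof.
move=> adj_iq lt_jk Aij Aik Aql.
have := adjacent_rows_ones_adjacent adj_iq Aij Aql.
have := adjacent_rows_ones_adjacent adj_iq Aik Aql.
rewrite /adjacent; lia.
Qed.

End FnPreserving.

Lemma unitmx_row_neq0 (R : comUnitRingType) (n : nat) (A : 'M[R]_n) (p : 'I_n) :
  A \in unitmx -> exists l, A p l != 0.
Proof.
move=> A_unit; apply/existsP; apply: contraLR A_unit; rewrite negb_exists => /forallP A_p0.
rewrite unitmxE (expand_det_row _ p) big1 ?unitr0 // => l _.
by rewrite (eqP (negPn (A_p0 l))) mul0r.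
Qed.

Lemma adjacent_row_eq_delta (n : nat) (A : 'M['F_2]_n) (i q j k : 'I_n) :
  Fn_good A -> adjacent i q -> (j < k)%N -> A i j = 1 -> A i k = 1 ->
  forall l, A q l = (l == j.+1 :> nat)%:R.
Proof.
move=> [A_unit A_Fn] adj_iq lt_jk Aij Aik l.
have [l0 /F2_neq0 Aql0] := unitmx_row_neq0 q A_unit.
have [_ l0_eq] := adjacent_row_of_two_ones A_Fn adj_iq lt_jk Aij Aik Aql0.
have [l_eq | l_neq] := eqVneq (l : nat) j.+1.
  by rewrite (_ : l = l0) //; apply/val_inj; rewrite /= l_eq l0_eq.
have [// | /F2_neq0 Aql] := eqVneq (A q l) 0.
by case/eqP: l_neq; exact: (adjacent_row_of_two_ones A_Fn adj_iq lt_jk Aij Aik Aql).2.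
Qed.

Theorem lemma2 (n : nat) (A : 'M['F_2]_n) (i j k : 'I_n) :
  (3 <= n)%N -> Fn_good A ->
  (j < k)%N -> A i j = 1 -> A i k = 1 ->
  (k : nat) = (j + 2)%N /\ ((i : nat) = 0%N \/ (i : nat) = n.-1).
Proof.
move=> n_ge3 A_good lt_jk Aij Aik.
split.
  have [q adj_iq] := exists_adjacent i (ltnW n_ge3).
  have [l /F2_neq0 Aql] := unitmx_row_neq0 q A_good.1.
  exact: (adjacent_row_of_two_ones A_good.2 adj_iq lt_jk Aij Aik Aql).1.
have [-> | i_neq0] := eqVneq (i : nat) 0%N; first by left.
have [-> | i_neq_last] := eqVneq (i : nat) n.-1; first by right.
have lt_i1n : (i.+1 < n)%N by have := ltn_ord i; lia.
have lt_i'n : (i.-1 < n)%N by have := ltn_ord i; lia.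
have adj_next : adjacent i (Ordinal lt_i1n) by rewrite /adjacent eqxx.
have adj_prev : adjacent i (Ordinal lt_i'n) by rewrite /adjacent /=; lia.
have := A_good.1; rewrite unitmxE.
rewrite (determinant_alternate (i1 := Ordinal lt_i1n) (i2 := Ordinal lt_i'n)) ?unitr0 //.
- by apply/eqP => /(congr1 val) /=; lia.
- move=> l; rewrite (adjacent_row_eq_delta A_good adj_next lt_jk Aij Aik).
  by rewrite (adjacent_row_eq_delta A_good adj_prev lt_jk Aij Aik).
Qed.
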